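(* Let $\mu$ be a probability measure on $\mathbb T^d$, $\varepsilon>0$, and let $\alpha,R>0$ be constants such that $x\mapsto\mathrm{dist}(0_d,x)^2$ is $\alpha$-strongly convex on $B_{\mathbb T^d}(0_d,R)$. Let $x_0\in\mathbb T^d$, $r<R$, $Q=B_{\mathbb T^d}(x_0,r)$, and let $\nu$ be a probability density with $\nu(x)\in[m_\nu,M_\nu]$ for $x\in Q$ ($0<m_\nu\le M_\nu$); set $\nu_Q=\nu1_Q/\nu(Q)$. Let $\gamma_Q(x)=Z_Q^{-1}e^{-\frac1\alpha\mathrm{dist}(x_0,x)^2}1_Q(x)$ with $Z_Q=\int_Qe^{-\frac1\alpha\mathrm{dist}(x_0,x)^2}dx$, and for $\phi\in\mathcal C(\mathbb T^d)$ let $\gamma_Q[\phi](y)=\frac{\gamma_Q(y)e^{\mathcal T^\varepsilon_\mu[\phi](y)}}{\int_Qe^{\mathcal T^\varepsilon_\mu[\phi]}d\gamma_Q}$. Then for every $\phi\in\mathcal C(\mathbb T^d)$ and $y\in Q$, $$m_\nu e^{-\frac{r^2}{\alpha}-4\pi^2d}\cdot\frac{\mathrm{vol}(Q)}{\nu(Q)}\le\frac{\nu_Q(y)}{\gamma_Q[\phi](y)}\le M_\nu e^{\frac{r^2}{\alpha}+4\pi^2d}\cdot\frac{\mathrm{vol}(Q)}{\nu(Q)}.$$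
   Context: $\mathbb T^d=\mathbb R^d/2\pi\mathbb Z^d$ with $\mathrm{dist}(x,y)=\min_{k\in\mathbb Z^d}\|x-y-2\pi k\|$, $B_{\mathbb T^d}(x,r)$ the open ball, $\mathrm{vol}$ Lebesgue measure. $\alpha$-strong convexity on a geodesically convex set is defined along geodesic interpolants: $f(z)\le(1-\lambda)f(x_0)+\lambda f(x_1)-\frac{\alpha\lambda(1-\lambda)}2\mathrm{dist}(x_0,x_1)^2$ whenever $\mathrm{dist}(z,x_0)=\lambda\mathrm{dist}(x_0,x_1)$, $\mathrm{dist}(z,x_1)=(1-\lambda)\mathrm{dist}(x_0,x_1)$. $\mathcal K_\varepsilon(x)=(2\pi\varepsilon)^{-d/2}\sum_{k}e^{-\|x-2\pi k\|^2/(2\varepsilon)}$, $c_\varepsilon(x,y)=-\varepsilon\log\mathcal K_\varepsilon(x-y)$, $\mathcal T^\varepsilon_\mu[\phi](y)=-\varepsilon\log\int e^{(\phi(x)-c_\varepsilon(x,y))/\varepsilon}d\mu(x)$. *)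

From HB Require Import structures.
From mathcomp Require Import all_boot all_order all_algebra.
From mathcomp Require Import all_classical all_reals all_analysis.
Set Implicit Arguments. Unset Strict Implicit. Unset Printing Implicit Defensive.
Import Order.TTheory GRing.Theory Num.Theory.
Import numFieldNormedType.Exports.
Local Open Scope classical_set_scope.
Local Open Scope ring_scope.

(* Points of the torus T^d = R^d / 2piZ^d are represented by their lifts,
   i.e. by points of R^d, encoded as d.-tuple R (which carries the product
   Borel sigma-algebra in MathComp-Analysis).  Functions/sets on T^d are
   2pi-torus_periodic functions/sets on R^d. *)
Section Torus.
Variable R : realType.

Definition sqnorm_shift d (x y : d.-tuple R) (k : {ffun 'I_d -> int}) : R :=
  \sum_(i < d) (tnth x i - tnth y i - 2 * pi * (k i)%:~R) ^+ 2.

Definition tdist d (x y : d.-tuple R) : R :=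
  inf [set Num.sqrt (sqnorm_shift x y k) | k in [set: {ffun 'I_d -> int}]].

Definition tball d (x : d.-tuple R) (r : R) : set (d.-tuple R) :=
  [set y | tdist x y < r].

Definition torigin d : d.-tuple R := [tuple (0 : R) | i < d].

Definition same_point d (x y : d.-tuple R) : Prop :=
  forall i : 'I_d, exists k : int, tnth x i - tnth y i = 2 * pi * k%:~R.

Definition torus_periodic d (f : d.-tuple R -> R) : Prop :=
  forall x y, same_point x y -> f x = f y.

Definition torus_continuous d (f : d.-tuple R -> R) : Prop :=
  torus_periodic f /\
  forall (x : d.-tuple R) (e : R), 0 < e -> exists2 delta : R, 0 < delta &
    forall y : d.-tuple R, (forall i, `|tnth x i - tnth y i| < delta) ->
      `|f x - f y| < e.

(* alpha-strong convexity along geodesic interpolants on S *)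
Definition strongly_convex_on d (S : set (d.-tuple R)) (f : d.-tuple R -> R)
    (alpha : R) : Prop :=
  forall (x0 x1 z : d.-tuple R) (l : R), S x0 -> S x1 -> 0 <= l <= 1 ->
    tdist z x0 = l * tdist x0 x1 -> tdist z x1 = (1 - l) * tdist x0 x1 ->
    f z <= (1 - l) * f x0 + l * f x1
           - alpha * l * (1 - l) / 2 * tdist x0 x1 ^+ 2.

(* Lebesgue integral over T^d of a nonnegative (extended-real) function,
   computed as the iterated integral over the fundamental domain
   [0, 2pi)^d (equal to the product-Lebesgue integral by Tonelli). *)
Fixpoint tint (n : nat) : (n.-tuple R -> \bar R) -> \bar R :=
  match n return (n.-tuple R -> \bar R) -> \bar R with
  | 0 => fun f => f [tuple]
  | n'.+1 => fun f =>
      (\int[lebesgue_measure]_(t in `[0%R, (2 * pi)%R[%classic)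
          tint (fun x : n'.-tuple R => f (cons_tuple t x)))%E
  end.

Definition tintegral d (A : set (d.-tuple R)) (f : d.-tuple R -> R) : R :=
  fine (tint (fun x => (f x * \1_A x)%:E)).

Definition tvol d (A : set (d.-tuple R)) : R := tintegral A (fun _ => 1).

Definition Kheat d (eps : R) (x : d.-tuple R) : R :=
  powR (2 * pi * eps) (- (d%:R / 2)) *
  fine (\esum_(k in [set: {ffun 'I_d -> int}])
          (expR (- sqnorm_shift x (torigin d) k / (2 * eps)))%:E)%E.

Definition tdiff d (x y : d.-tuple R) : d.-tuple R :=
  [tuple tnth x i - tnth y i | i < d].

Definition ceps d (eps : R) (x y : d.-tuple R) : R :=
  - eps * ln (Kheat eps (tdiff x y)).

Definition Teps d (mu : probability (d.-tuple R) R) (eps : R)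
    (phi : d.-tuple R -> R) (y : d.-tuple R) : R :=
  - eps * ln (fine (\int[mu]_x (expR ((phi x - ceps eps x y) / eps))%:E)%E).

Definition gammaQ d (alpha : R) (x0 : d.-tuple R) (r : R) (x : d.-tuple R) : R :=
  let Q := tball x0 r in
  let ZQ := tintegral Q (fun z => expR (- (tdist x0 z ^+ 2) / alpha)) in
  ZQ^-1 * expR (- (tdist x0 x ^+ 2) / alpha) * \1_Q x.

Definition gammaQphi d (mu : probability (d.-tuple R) R) (eps alpha : R)
    (x0 : d.-tuple R) (r : R) (phi : d.-tuple R -> R) (y : d.-tuple R) : R :=
  let Q := tball x0 r in
  gammaQ alpha x0 r y * expR (Teps mu eps phi y) /
  tintegral Q (fun x => expR (Teps mu eps phi x) * gammaQ alpha x0 r x).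

End Torus.

From HB Require Import structures.
From mathcomp Require Import all_boot all_order all_algebra.
From mathcomp Require Import all_classical all_reals all_analysis.
From mathcomp Require Import ring lra.
Import Order.TTheory GRing.Theory Num.Theory.
Import numFieldNormedType.Exports.
Set Implicit Arguments. Unset Strict Implicit. Unset Printing Implicit Defensive.
Local Open Scope classical_set_scope.
Local Open Scope ring_scope.

(* On Q the ratio factors as
     (nu y / nu(Q)) * (int_Q e^T dgamma_Q / e^(T y)) * (Z_Q / e^(-dist(x0,y)^2/alpha)),
   with T = T^eps_mu[phi].  The first factor lies in [m_nu, M_nu] / nu(Q), and the
   last in [e^(-r^2/alpha) vol Q, e^(r^2/alpha) vol Q] because the Gaussian weight
   lies in [e^(-r^2/alpha), 1] on Q.  For the middle factor, T oscillates by at most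
   d pi^2 / 2 <= 4 pi^2 d: moving one coordinate of x changes the periodised Gaussian
   sum_k e^(-|x - 2 pi k|^2 / 2 eps) by a factor at most e^(pi^2 / 2 eps), by convexity
   of exp between two consecutive periods; hence c_eps(z, .) oscillates by at most
   d pi^2 / 2, and so does its soft-min T. *)

(* The integrands below, built from [Teps] and from the nested integrals of [tint],
   are not known to be measurable: monotonicity and homogeneity of the integral
   are derived from its definition as a supremum over simple functions. *)
Section integral_without_measurability.
Context d (T : measurableType d) (R : realType).
Variables (mu : {measure set T -> \bar R}) (D : set T).
Local Open Scope ereal_scope.
Import HBNNSimple.

Lemma ge0_le_integral_nomeas (f g : T -> \bar R) :
  (forall x, D x -> 0 <= f x) -> (forall x, D x -> f x <= g x) ->
  \int[mu]_(x in D) f x <= \int[mu]_(x in D) g x.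
Proof.
move=> f0 fg.
have g0 x : D x -> 0 <= g x by move=> Dx; exact: le_trans (f0 x Dx) (fg x Dx).
rewrite !ge0_integralE//; apply: le_ereal_sup => _ [h hf <-]; exists h => //= x.
exact: le_trans (hf x) (lee_restrict fg x).
Qed.

Lemma gt0_le_integralZl_nomeas (f : T -> \bar R) (k : R) : (0 < k)%R ->
  (forall x, D x -> 0 <= f x) ->
  k%:E * \int[mu]_(x in D) f x <= \int[mu]_(x in D) (k%:E * f x).
Proof.
move=> k0 f0.
have kf0 x : D x -> 0 <= k%:E * f x by move=> Dx; apply: mule_ge0; [rewrite lee_fin ltW | exact: f0].
rewrite !ge0_integralE// -ereal_sup_pZl//; apply: le_ereal_sup.
move=> _ [_ [h hf <-] <-].
exists (scale_nnsfun h (ltW k0)); last by rewrite -sintegralrM.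
move=> x /=; have := hf x; rewrite /patch; case: ifP => _ hfx.
  by rewrite EFinM; apply: lee_wpmul2l; [rewrite lee_fin ltW | exact: hfx].
move: hfx; change (point : \bar R) with (0%R : \bar R); rewrite !lee_fin => hx.
by rewrite mulr_ge0_le0// ltW.
Qed.

Lemma gt0_integralZl_nomeas (f : T -> \bar R) (k : R) : (0 < k)%R ->
  (forall x, D x -> 0 <= f x) ->
  \int[mu]_(x in D) (k%:E * f x) = k%:E * \int[mu]_(x in D) f x.
Proof.
move=> k0 f0; apply/eqP; rewrite eq_le gt0_le_integralZl_nomeas// andbT.
have ki0 : (0 < k^-1)%R by rewrite invr_gt0.
have kf0 x : D x -> 0 <= k%:E * f x by move=> Dx; apply: mule_ge0; [rewrite lee_fin ltW | exact: f0].
rewrite -[leLHS]mul1e -(mulfV (lt0r_neq0 k0)) EFinM -muleA.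
apply: lee_wpmul2l; first by rewrite lee_fin ltW.
apply: le_trans (gt0_le_integralZl_nomeas ki0 kf0) _.
by under eq_integral do rewrite muleA -EFinM mulVf ?lt0r_neq0// mul1e.
Qed.

End integral_without_measurability.

Lemma ge0_esumZl (R : realType) (T : choiceType) (I : set T) (a : T -> \bar R) (c : R) :
  0 <= c -> (forall i, (0 <= a i)%E) ->
  (\esum_(i in I) (c%:E * a i) = c%:E * \esum_(i in I) a i)%E.
Proof.
move=> c0 a0; rewrite /esum -ereal_supZl//; last first.
  by apply/set0P; exists 0%E; exists set0; [exact: fsets_set0 | exact: fsbig_set0].
congr ereal_sup; apply/seteqP; split.
  move=> _ [X HX <-]; exists (\sum_(x \in X) a x)%E; first by exists X.
  by rewrite ge0_mule_fsumr.
by move=> _ [_ [X HX <-] <-]; exists X => //; rewrite ge0_mule_fsumr.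
Qed.

Section torus_integral.
Variable R : realType.
Local Open Scope ereal_scope.

Lemma tint_ge0 n (f : n.-tuple R -> \bar R) : (forall x, 0 <= f x) -> 0 <= tint f.
Proof.
elim: n f => [|n IH] f f0 /=; first exact: f0.
by apply: integral_ge0 => t _; apply: IH.
Qed.

Lemma le_tint n (f g : n.-tuple R -> \bar R) :
  (forall x, 0 <= f x) -> (forall x, f x <= g x) -> tint f <= tint g.
Proof.
elim: n f g => [|n IH] f g f0 fg /=; first exact: fg.
by apply: ge0_le_integral_nomeas => t _; [exact: tint_ge0 | exact: IH].
Qed.

Lemma tintZl n (f : n.-tuple R -> \bar R) (k : R) : (0 < k)%R ->
  (forall x, 0 <= f x) -> tint (fun x => k%:E * f x) = k%:E * tint f.
Proof.
move=> k0; elim: n f => [|n IH] f f0 //=.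
rewrite -gt0_integralZl_nomeas// => [|t _]; last exact: tint_ge0.
by apply: eq_integral => t _; rewrite IH.
Qed.

Lemma tintegral_ge0 d (A : set (d.-tuple R)) (f : d.-tuple R -> R) :
  (forall x, A x -> 0 <= f x)%R -> (0 <= tintegral A f)%R.
Proof.
move=> f0; apply/fine_ge0/tint_ge0 => x; rewrite lee_fin indicE.
by case: (boolP (x \in A)) => [/set_mem/f0|]; rewrite ?mulr1 ?mulr0.
Qed.

(* [fine +oo = 0], so the bounds also hold when the integral of [g] diverges. *)
Lemma tintegral_sandwich d (A : set (d.-tuple R)) (f g : d.-tuple R -> R) (a b : R) :
  (0 < a)%R -> (0 < b)%R -> (forall x, A x -> 0 <= g x)%R ->
  (forall x, A x -> a * g x <= f x <= b * g x)%R ->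
  (a * tintegral A g <= tintegral A f <= b * tintegral A g)%R.
Proof.
move=> a0 b0 g0 fg; rewrite /tintegral.
have gA0 x : 0 <= (g x * \1_A x)%:E.
  by rewrite lee_fin indicE; case: (boolP (x \in A)) => [/set_mem/g0|]; rewrite ?mulr1 ?mulr0.
have fgA x : a%:E * (g x * \1_A x)%:E <= (f x * \1_A x)%:E <= b%:E * (g x * \1_A x)%:E.
  rewrite -!EFinM !lee_fin indicE; case: (boolP (x \in A)) => [/set_mem/fg|].
    by rewrite !mulr1.
  by rewrite !mulr0 lexx.
have fA0 x : 0 <= (f x * \1_A x)%:E.
  case/andP: (fgA x) => + _; apply: le_trans.
  by apply: mule_ge0; [rewrite lee_fin ltW | exact: gA0].
have lo : a%:E * tint (fun x => (g x * \1_A x)%:E) <= tint (fun x => (f x * \1_A x)%:E).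
  rewrite -tintZl//; apply: le_tint => x; last by case/andP: (fgA x).
  by apply: mule_ge0; [rewrite lee_fin ltW | exact: gA0].
have up : tint (fun x => (f x * \1_A x)%:E) <= b%:E * tint (fun x => (g x * \1_A x)%:E).
  by rewrite -tintZl//; apply: le_tint => x; [exact: fA0 | case/andP: (fgA x)].
move: lo up (tint_ge0 gA0).
case: (tint (fun x => (g x * \1_A x)%:E)) => [G| |//];
  case: (tint (fun x => (f x * \1_A x)%:E)) => [F| |] //=.
- by rewrite -!EFinM !lee_fin => -> ->.
- by rewrite gt0_muley ?lte_fin.
- by rewrite !mulr0 lexx.
- by rewrite gt0_muley ?lte_fin.
Qed.

End torus_integral.

Lemma expR_convex (R : realType) (l U V : R) : 0 <= l -> l <= 1 ->
  expR ((1 - l) * U + l * V) <= (1 - l) * expR U + l * expR V.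
Proof.
move=> l0 l1; have := @convex_expR R (Itv01 l0 l1) V U.
by rewrite !convRE /= addrC [X in _ <= X]addrC.
Qed.

Lemma mod_2pi (R : realType) (t q : R) :
  exists m : int, exists2 l : R, 0 <= l <= 1 & t = q + 2 * pi * m%:~R + 2 * pi * l.
Proof.
have pi2_gt0 : 0 < 2 * pi :> R by rewrite mulr_gt0 ?pi_gt0.
set x := (t - q) / (2 * pi).
exists (Num.floor x); exists (x - (Num.floor x)%:~R).
  rewrite subr_ge0 Num.Theory.floor_le /=.
  by have := Num.Theory.floorD1_gt x; rewrite intrD; lra.
by rewrite -addrA -mulrDr [_%:~R + _]addrC subrK /x mulrC divfK ?gt_eqF // addrC subrK.
Qed.

(* (u + 2 pi l)^2 is the (1 - l, l)-combination of u^2 and (u + 2 pi)^2 minus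
   l (1 - l) (2 pi)^2, and l (1 - l) <= 1/4. *)
Lemma gauss_interp (R : realType) (eps u s l : R) : 0 < eps -> 0 <= l <= 1 ->
  expR (- ((u + 2 * pi * l) ^+ 2 + s) / (2 * eps)) <=
  expR (pi ^+ 2 / (2 * eps)) *
    ((1 - l) * expR (- (u ^+ 2 + s) / (2 * eps)) +
     l * expR (- ((u + 2 * pi) ^+ 2 + s) / (2 * eps))).
Proof.
move=> eps_gt0 /andP[l0 l1].
have -> : - ((u + 2 * pi * l) ^+ 2 + s) / (2 * eps) =
    l * (1 - l) * (4 * pi ^+ 2) / (2 * eps) +
    ((1 - l) * (- (u ^+ 2 + s) / (2 * eps)) +
     l * (- ((u + 2 * pi) ^+ 2 + s) / (2 * eps))).
  by ring.
rewrite expRD; apply: ler_pM; [exact: expR_ge0 | exact: expR_ge0 | | exact: expR_convex].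
rewrite ler_expR ler_pM2r ?invr_gt0 ?mulr_gt0// -subr_ge0.
have -> : pi ^+ 2 - l * (1 - l) * (4 * pi ^+ 2) = (pi * (2 * l - 1)) ^+ 2 :> R by ring.
exact: sqr_ge0.
Qed.

Section theta.
Variables (R : realType) (d : nat) (eps : R).
Hypothesis eps_gt0 : 0 < eps.

Definition theta (x : d.-tuple R) : \bar R :=
  (\esum_(k in [set: {ffun 'I_d -> int}])
     (expR (- sqnorm_shift x (torigin R d) k / (2 * eps)))%:E)%E.

Lemma theta_ge0 x : (0 <= theta x)%E.
Proof. by apply: esum_ge0 => k _; rewrite lee_fin expR_ge0. Qed.

Lemma sqnorm_shift_torigin (x : d.-tuple R) k :
  sqnorm_shift x (torigin R d) k = \sum_(i < d) (tnth x i - 2 * pi * (k i)%:~R) ^+ 2.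
Proof. by apply: eq_bigr => i _; rewrite tnth_mktuple subr0. Qed.

Lemma theta_periodic (x x' : d.-tuple R) (j : {ffun 'I_d -> int}) :
  (forall i, tnth x' i = tnth x i + 2 * pi * (j i)%:~R) -> theta x' = theta x.
Proof.
move=> x'E; pose e (k : {ffun 'I_d -> int}) := [ffun i => k i + j i].
have e_bij : set_bij [set: {ffun 'I_d -> int}] [set: {ffun 'I_d -> int}] e.
  rewrite setTT_bijective; exists (fun k : {ffun 'I_d -> int} => [ffun i => k i - j i]) => k.
    by apply/ffunP => i; rewrite !ffunE addrK.
  by apply/ffunP => i; rewrite !ffunE subrK.
rewrite /theta (@reindex_esum _ _ _ setT setT e _ e_bij); apply: eq_esum => k _.
suff -> : sqnorm_shift x' (torigin R d) (e k) = sqnorm_shift x (torigin R d) k by [].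
rewrite !sqnorm_shift_torigin; apply: eq_bigr => i _.
by rewrite x'E ffunE intrD; congr (_ ^+ 2); ring.
Qed.

Definition set_tnth (a : d.-tuple R) (i : 'I_d) (q : R) : d.-tuple R :=
  [tuple if j == i then q else tnth a j | j < d].

Lemma tnth_set_tnth a i q j : tnth (set_tnth a i q) j = if j == i then q else tnth a j.
Proof. exact: tnth_mktuple. Qed.

Lemma sqnorm_shift_bigD1 (a : d.-tuple R) i k :
  sqnorm_shift a (torigin R d) k = (tnth a i - 2 * pi * (k i)%:~R) ^+ 2 +
    \sum_(j < d | j != i) (tnth a j - 2 * pi * (k j)%:~R) ^+ 2.
Proof. by rewrite sqnorm_shift_torigin (bigD1 i). Qed.

Lemma sqnorm_shift_set_tnth a i q k :
  sqnorm_shift (set_tnth a i q) (torigin R d) k = (q - 2 * pi * (k i)%:~R) ^+ 2 +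
    \sum_(j < d | j != i) (tnth a j - 2 * pi * (k j)%:~R) ^+ 2.
Proof.
rewrite (sqnorm_shift_bigD1 _ i) tnth_set_tnth eqxx; congr (_ + _).
by apply: eq_bigr => j /negbTE ji; rewrite tnth_set_tnth ji.
Qed.

Lemma theta_set_tnth_periodic a i q (m : int) :
  theta (set_tnth a i (q + 2 * pi * m%:~R)) = theta (set_tnth a i q).
Proof.
apply: (theta_periodic (j := [ffun j => if j == i then m else 0])) => j.
by rewrite !tnth_set_tnth ffunE; case: (j == i); rewrite ?mulr0 ?addr0.
Qed.

(* With [tnth a i = p + 2 pi l], [p = q] mod [2 pi] and [0 <= l <= 1], each term of
   [theta a] is bounded through [gauss_interp] by the terms at [p] and [p + 2 pi],
   whose sums both equal [theta (set_tnth a i q)] by periodicity. *)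
Lemma theta_set_tnth_le a i q :
  (theta a <= (expR (pi ^+ 2 / (2 * eps)))%:E * theta (set_tnth a i q))%E.
Proof.
have [m [l l01 aiE]] := mod_2pi (tnth a i) q.
have [l0 l1] := andP l01.
rewrite -(theta_set_tnth_periodic a i q m); set p := q + _ in aiE *.
have theta_p1 : theta (set_tnth a i (p + 2 * pi)) = theta (set_tnth a i p).
  by have := theta_set_tnth_periodic a i p 1; rewrite mulr1.
pose term x k := (expR (- sqnorm_shift x (torigin R d) k / (2 * eps)))%:E.
set c := expR (pi ^+ 2 / (2 * eps)).
have term_le k : (term a k <= (c * (1 - l))%:E * term (set_tnth a i p) k +
                             (c * l)%:E * term (set_tnth a i (p + 2 * pi)) k)%E.
  rewrite /term -!EFinM -EFinD lee_fin (sqnorm_shift_bigD1 _ i) !sqnorm_shift_set_tnth.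
  set s := \sum_(j < d | j != i) _; set u := p - 2 * pi * (k i)%:~R.
  have -> : tnth a i - 2 * pi * (k i)%:~R = u + 2 * pi * l by rewrite aiE /u; ring.
  have -> : p + 2 * pi - 2 * pi * (k i)%:~R = u + 2 * pi by rewrite /u; ring.
  by have := gauss_interp u s eps_gt0 l01; rewrite -/c [c * (_ * _ + _ * _)]mulrDr !mulrA.
have term_ge0 x k : (0 <= term x k)%E by rewrite lee_fin expR_ge0.
have c_ge0 : 0 <= c by exact: expR_ge0.
apply: le_trans (le_esum (fun k _ => term_le k)) _.
rewrite esumD => [|k _|k _]; last 2 first.
- by apply: mule_ge0; rewrite // lee_fin mulr_ge0// subr_ge0.
- by apply: mule_ge0; rewrite // lee_fin mulr_ge0.
rewrite !ge0_esumZl ?mulr_ge0 ?subr_ge0// -/(theta _) -/(theta _) theta_p1.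
by rewrite -ge0_muleDl ?lee_fin ?mulr_ge0 ?subr_ge0// -EFinD -mulrDr subrK mulr1.
Qed.

Definition splice (a b : d.-tuple R) (n : nat) : d.-tuple R :=
  [tuple if (j < n)%N then tnth b j else tnth a j | j < d].

Lemma theta_splice_le a b n : (n <= d)%N ->
  (theta a <= (expR (n%:R * (pi ^+ 2 / (2 * eps))))%:E * theta (splice a b n))%E.
Proof.
elim: n => [_|n IH lt_nd].
  have -> : splice a b 0 = a by apply: eq_from_tnth => j; rewrite tnth_mktuple.
  by rewrite mul0r expR0 mul1e.
apply: le_trans (IH (ltnW lt_nd)) _.
have -> : splice a b n.+1 = set_tnth (splice a b n) (Ordinal lt_nd) (tnth b (Ordinal lt_nd)).
  apply: eq_from_tnth => j; rewrite tnth_set_tnth !tnth_mktuple.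
  have [->|] := eqVneq j (Ordinal lt_nd); first by rewrite /= ltnSn.
  by rewrite -val_eqE /= ltnS leq_eqVlt => /negbTE ->.
set c := pi ^+ 2 / (2 * eps).
have -> : n.+1%:R * c = n%:R * c + c by rewrite -natr1 mulrDl mul1r.
rewrite expRD EFinM -muleA.
by apply: lee_wpmul2l; [rewrite lee_fin expR_ge0 | exact: theta_set_tnth_le].
Qed.

Lemma theta_le a b :
  (theta a <= (expR (d%:R * (pi ^+ 2 / (2 * eps))))%:E * theta b)%E.
Proof.
have -> : b = splice a b d by apply: eq_from_tnth => j; rewrite tnth_mktuple ltn_ord.
exact: theta_splice_le.
Qed.

End theta.

(* The comparisons are required in both directions because of the junk values
   [fine +oo = 0] and [ln 0 = 0]. *)
Lemma fine_le_mutual (R : realType) (A B : \bar R) (s : R) : (0 <= B)%E ->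
  (A <= (expR s)%:E * B)%E -> (B <= (expR s)%:E * A)%E -> fine A <= expR s * fine B.
Proof.
have es_gt0 : (0 < (expR s)%:E)%E by rewrite lte_fin expR_gt0.
by case: A => [x| |]; case: B => [y| |] //=; rewrite ?gt0_muley ?gt0_muleNy.
Qed.

Lemma ln_le_mutual (R : realType) (u v s : R) : 0 <= s -> 0 <= v ->
  u <= expR s * v -> v <= expR s * u -> ln u <= ln v + s.
Proof.
move=> s0 v0 uv vu; have [v_eq0|v_gt0] := eqVneq v 0.
  by move: uv; rewrite v_eq0 mulr0 => /ln0 ->; rewrite ln0 ?add0r.
have v_pos : 0 < v by rewrite lt_def v_gt0.
have u_pos : 0 < u.
  by rewrite -(pmulr_rgt0 _ (expR_gt0 s)); apply: lt_le_trans vu.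
by rewrite -[s]expRK -lnM ?posrE ?expR_gt0// ler_ln ?posrE ?mulr_gt0 ?expR_gt0// mulrC.
Qed.

Lemma neg_scale_le (R : realType) (eps a b s : R) : 0 < eps -> a <= b + s ->
  - eps * b <= - eps * a + eps * s.
Proof. by move=> eps_gt0 ab; have := ler_wpM2l (ltW eps_gt0) ab; rewrite mulrDr; lra. Qed.

Section heat_kernel.
Variables (R : realType) (d : nat) (eps : R).
Hypothesis eps_gt0 : 0 < eps.
Implicit Types a b x y z : d.-tuple R.

Lemma Kheat_ge0 a : 0 <= Kheat eps a.
Proof. by rewrite mulr_ge0 ?powR_ge0 ?fine_ge0 ?theta_ge0. Qed.

Lemma Kheat_le a b :
  Kheat eps a <= expR (d%:R * (pi ^+ 2 / (2 * eps))) * Kheat eps b.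
Proof.
rewrite /Kheat mulrCA ler_wpM2l ?powR_ge0//.
by apply: fine_le_mutual; rewrite ?theta_ge0 ?theta_le.
Qed.

Lemma ceps_le z x y : ceps eps z x <= ceps eps z y + d%:R * pi ^+ 2 / 2.
Proof.
have -> : d%:R * pi ^+ 2 / 2 = eps * (d%:R * (pi ^+ 2 / (2 * eps))).
  by field; rewrite gt_eqF.
apply: neg_scale_le => //; apply: ln_le_mutual; rewrite ?Kheat_le ?Kheat_ge0//.
by rewrite mulr_ge0 // divr_ge0 ?sqr_ge0 // mulr_ge0 // ltW.
Qed.

Lemma Teps_le (mu : probability (d.-tuple R) R) (phi : d.-tuple R -> R) x y :
  Teps mu eps phi x <= Teps mu eps phi y + d%:R * pi ^+ 2 / 2.
Proof.
set S := d%:R * pi ^+ 2 / 2.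
have S_ge0 : 0 <= S by rewrite /S divr_ge0 // mulr_ge0 // sqr_ge0.
pose J w := (\int[mu]_z (expR ((phi z - ceps eps z w) / eps))%:E)%E.
have J_ge0 w : (0 <= J w)%E by apply: integral_ge0 => z _; rewrite lee_fin expR_ge0.
have J_le w w' : (J w <= (expR (S / eps))%:E * J w')%E.
  rewrite -gt0_integralZl_nomeas ?expR_gt0//.
  apply: ge0_le_integral_nomeas => z _; first by rewrite lee_fin expR_ge0.
  rewrite -EFinM lee_fin -expRD ler_expR -mulrDl ler_pM2r ?invr_gt0//.
  by rewrite addrCA lerD2l lerNl opprB lerBlDr; exact: ceps_le.
have -> : S = eps * (S / eps) by rewrite mulrC divfK ?gt_eqF.
apply: neg_scale_le => //; apply: ln_le_mutual.
- by rewrite divr_ge0 // ltW.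
- exact: fine_ge0 (J_ge0 _).
- exact: fine_le_mutual (J_ge0 _) (J_le _ _) (J_le _ _).
- exact: fine_le_mutual (J_ge0 _) (J_le _ _) (J_le _ _).
Qed.

End heat_kernel.

Section ball.
Variables (R : realType) (d : nat) (alpha : R) (x0 : d.-tuple R) (r : R).
Hypothesis alpha_gt0 : 0 < alpha.

Lemma tdist_ge0 (x y : d.-tuple R) : 0 <= tdist x y.
Proof.
apply: lb_le_inf; first by exists (Num.sqrt (sqnorm_shift x y [ffun=> 0])), [ffun=> 0].
by move=> _ [k _ <-]; exact: sqrtr_ge0.
Qed.

Lemma gauss_tball_bounds x : tball x0 r x ->
  expR (- (r ^+ 2 / alpha)) <= expR (- (tdist x0 x ^+ 2) / alpha) <= 1.
Proof.
move=> /= xr; have d_ge0 := tdist_ge0 x0 x; apply/andP; split.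
  rewrite ler_expR mulNr lerN2 ler_pM2r ?invr_gt0// ler_sqr ?nnegrE//.
    exact: ltW.
  exact: le_trans d_ge0 (ltW xr).
by rewrite expR_le1 mulNr oppr_le0 divr_ge0 ?sqr_ge0// ltW.
Qed.

Lemma gammaQ_ge0 x : 0 <= gammaQ alpha x0 r x.
Proof.
rewrite /gammaQ !mulr_ge0 ?invr_ge0 ?expR_ge0 ?indicE ?ler0n//.
by apply: tintegral_ge0 => z _; exact: expR_ge0.
Qed.

Lemma tintegral_gammaQ :
  0 < tintegral (tball x0 r) (fun x => expR (- (tdist x0 x ^+ 2) / alpha)) ->
  tintegral (tball x0 r) (gammaQ alpha x0 r) = 1.
Proof.
set g := fun x => expR (- (tdist x0 x ^+ 2) / alpha); set Z := tintegral _ g.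
move=> Z_gt0; have Zi_gt0 : 0 < Z^-1 by rewrite invr_gt0.
have gQE x : tball x0 r x -> Z^-1 * g x <= gammaQ alpha x0 r x <= Z^-1 * g x.
  by move=> Qx; rewrite /gammaQ /= indicE mem_set// mulr1 lexx.
have /andP[lo hi] := tintegral_sandwich Zi_gt0 Zi_gt0 (fun x _ => expR_ge0 _) gQE.
by apply/eqP; rewrite eq_le -{1}(mulVf (lt0r_neq0 Z_gt0)) hi -{1}(mulVf (lt0r_neq0 Z_gt0)).
Qed.

Lemma gammaQ_average_expTeps (mu : probability (d.-tuple R) R) (eps : R)
    (phi : d.-tuple R -> R) (y : d.-tuple R) : 0 < eps ->
  0 < tintegral (tball x0 r) (fun x => expR (- (tdist x0 x ^+ 2) / alpha)) ->
  expR (- (d%:R * pi ^+ 2 / 2)) <=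
    tintegral (tball x0 r) (fun x => expR (Teps mu eps phi x) * gammaQ alpha x0 r x) /
      expR (Teps mu eps phi y) <=
  expR (d%:R * pi ^+ 2 / 2).
Proof.
move=> eps_gt0 Z_gt0; set T := Teps mu eps phi; set S : R := d%:R * pi ^+ 2 / 2.
have gQ_ge0 x : tball x0 r x -> 0 <= gammaQ alpha x0 r x by move=> _; exact: gammaQ_ge0.
have gQ_bnd x : tball x0 r x ->
    expR (T y - S) * gammaQ alpha x0 r x <= expR (T x) * gammaQ alpha x0 r x
    <= expR (T y + S) * gammaQ alpha x0 r x.
  by move=> _; rewrite !ler_wpM2r ?gammaQ_ge0 ?ler_expR ?lerBlDr ?Teps_le.
have := tintegral_sandwich (expR_gt0 (T y - S)) (expR_gt0 (T y + S)) gQ_ge0 gQ_bnd.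
rewrite tintegral_gammaQ // !mulr1 => /andP[lo hi]; apply/andP; split.
  by rewrite ler_pdivlMr ?expR_gt0 // -expRD addrC.
by rewrite ler_pdivrMr ?expR_gt0 // -expRD addrC.
Qed.

End ball.

Lemma ratio_bounds (R : realType) (a s K nu m M N eT I Z V gy : R) :
  0 < m -> m <= nu <= M -> 0 <= N -> expR (- a) <= gy <= 1 ->
  0 <= Z -> expR (- a) * V <= Z <= V -> 0 < eT ->
  (0 < Z -> expR (- s) <= I / eT <= expR s) -> s <= K ->
  m * expR (- a - K) * (V / N) <= nu / N * (I / eT) * (Z / gy) <=
  M * expR (a + K) * (V / N).
Proof.
move=> m_gt0 /andP[m_nu nu_M] N_ge0 /andP[ea_gy gy1] Z_ge0 /andP[eaV_Z Z_V] eT_gt0 I_bnd sK.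
have ea_gt0 := expR_gt0 (- a); have gy_gt0 := lt_le_trans ea_gt0 ea_gy.
have [Z0|Z_gt0] := eqVneq Z 0.
  have V0 : V = 0.
    apply: le_anti; apply/andP; split; last by rewrite -Z0.
    by rewrite -(pmulr_rle0 _ ea_gt0) -Z0.
  by rewrite Z0 V0 !(mul0r, mulr0) lexx.
have {Z_gt0}Z_gt0 : 0 < Z by rewrite lt_def Z_gt0.
have /andP[Ilo Ihi] := I_bnd Z_gt0.
have nuN_ge0 : 0 <= nu / N by rewrite divr_ge0 // (le_trans (ltW m_gt0)).
have IeT_ge0 : 0 <= I / eT := le_trans (expR_ge0 _) Ilo.
apply/andP; split.
  have -> : m * expR (- a - K) * (V / N) = m / N * expR (- K) * (expR (- a) * V).
    by rewrite expRD; ring.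
  apply: ler_pM.
  - by rewrite mulr_ge0 ?expR_ge0 // divr_ge0 // ltW.
  - by rewrite mulr_ge0 ?expR_ge0 // (le_trans Z_ge0).
  - apply: ler_pM; [by rewrite divr_ge0 // ltW | exact: expR_ge0 | |].
      by rewrite ler_wpM2r ?invr_ge0.
    by apply: le_trans _ Ilo; rewrite ler_expR lerN2.
  - by apply: (le_trans eaV_Z); rewrite ler_peMr // invf_ge1.
have -> : M * expR (a + K) * (V / N) = M / N * expR K * (V / expR (- a)).
  by rewrite expRD expRN invrK; ring.
apply: ler_pM; [exact: mulr_ge0 | by rewrite divr_ge0 // ltW | |].
- apply: ler_pM => //; first by rewrite ler_wpM2r ?invr_ge0.
  by apply: (le_trans Ihi); rewrite ler_expR.
- by apply: ler_pM; rewrite ?invr_ge0 ?lef_pV2 ?posrE // ltW.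
Qed.

Theorem lemma3p6 (R : realType) (d : nat)
    (mu : probability (d.-tuple R) R) (eps alpha Rr : R)
    (heps : 0 < eps) (halpha : 0 < alpha) (hR : 0 < Rr)
    (hconv : strongly_convex_on (tball (torigin R d) Rr)
               (fun x => tdist (torigin R d) x ^+ 2) alpha)
    (x0 : d.-tuple R) (r : R) (hr : r < Rr)
    (nu : d.-tuple R -> R) (m_nu M_nu : R)
    (hnu_per : torus_periodic nu) (hnu_meas : measurable_fun setT nu)
    (hnu_ge0 : forall x, 0 <= nu x)
    (hnu_1 : tint (fun x => (nu x)%:E) = 1%E)
    (hm : 0 < m_nu) (hmM : m_nu <= M_nu)
    (hnuQ : forall x, tball x0 r x -> m_nu <= nu x <= M_nu) :
  let Q := tball x0 r in
  let nuQmass := tintegral Q nu in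
  let nuQ := fun y => nu y * \1_Q y / nuQmass in
  forall phi : d.-tuple R -> R, torus_continuous phi ->
  forall y, Q y ->
    m_nu * expR (- (r ^+ 2 / alpha) - 4 * pi ^+ 2 * d%:R) * (tvol Q / nuQmass)
      <= nuQ y / gammaQphi mu eps alpha x0 r phi y
    /\ nuQ y / gammaQphi mu eps alpha x0 r phi y
      <= M_nu * expR (r ^+ 2 / alpha + 4 * pi ^+ 2 * d%:R) * (tvol Q / nuQmass).
Proof.
move=> Q N nuQ phi _ y Qy.
set T := Teps mu eps phi; set g := fun x => expR (- (tdist x0 x ^+ 2) / alpha).
set Z := tintegral Q g.
set I := tintegral Q (fun x => expR (T x) * gammaQ alpha x0 r x).
have g_bnd := gauss_tball_bounds halpha.
have /andP[eaV_Z] : expR (- (r ^+ 2 / alpha)) * tvol Q <= Z <= 1 * tvol Q.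
  apply: tintegral_sandwich => [||x _|x Qx]; rewrite ?expR_gt0 ?expR_ge0 // !mulr1.
  exact: g_bnd.
rewrite mul1r => Z_V.
have ratioE : nuQ y / gammaQphi mu eps alpha x0 r phi y =
              nu y / N * (I / expR (T y)) * (Z / g y).
  rewrite /nuQ /gammaQphi /gammaQ /= indicE mem_set // !mulr1 -/T -/I -/g -/Z.
  by rewrite !invfM !invrK; ring.
rewrite ratioE; apply/andP; apply: (ratio_bounds (s := d%:R * pi ^+ 2 / 2)) => //.
- exact: hnuQ.
- exact: tintegral_ge0.
- exact: g_bnd.
- by apply: tintegral_ge0 => x _; exact: expR_ge0.
- by rewrite eaV_Z Z_V.
- exact: expR_gt0.
- exact: gammaQ_average_expTeps.
- by have := mulr_ge0 (ler0n R d) (sqr_ge0 pi); lra.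
Qed.
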